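(* Let $f$ be a nonzero real polynomial in $x_1,\ldots,x_n$ all of whose coefficients in the scaled monomial basis lie in $\{0,1\}$, and let $\mathcal{M}$ be the set of monomials occurring in $f$ (those with coefficient $1$). Then for every integer $k\ge 0$, $$\dim \partial^{=k} f \geq \frac{\sum_{P \in \mathcal{M}} \binom{\sup(P)}{k}}{|\mathcal{M}|^2},$$ where $\sup(P)$ denotes the number of distinct variables occurring in the monomial $P$.
   Context: For $\alpha\in\mathbb{N}^n$ the scaled monomial is $x^\alpha = x_1^{\alpha_1}\cdots x_n^{\alpha_n}/(\alpha_1!\cdots\alpha_n!)$; these form a basis of $\mathbb{R}[x_1,\ldots,x_n]$ (the scaled monomial basis), and coefficients of $f$ are taken with respect to this basis, i.e. $f=\sum_\alpha a_\alpha x^\alpha$. For $\beta\in\mathbb{N}^n$, $\partial_\beta f$ is the partial derivative differentiating $\beta_i$ times with respect to $x_i$; $\partial^{=k} f$ is the real linear span of all $\partial_\beta f$ with $\beta_1+\cdots+\beta_n=k$. *)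

From HB Require Import structures.
From mathcomp Require Import all_boot all_order all_algebra.
From mathcomp Require Import mpoly.
From mathcomp Require Import reals.
From Stdlib Require Import ClassicalDescription.

Set Implicit Arguments.
Unset Strict Implicit.
Unset Printing Implicit Defensive.

Import Order.TTheory GRing.Theory Num.Theory.
Local Open Scope ring_scope.

Definition pbool (P : Prop) : bool :=
  if excluded_middle_informative P then true else false.

Definition lin_indep (K : fieldType) (V : lmodType K) (s : seq V) : Prop :=
  forall c : 'I_(size s) -> K,
    \sum_(i < size s) c i *: s`_i = 0 -> forall i, c i = 0.

Definition dim_spanf (K : fieldType) (V : lmodType K) (s : seq V) : nat :=
  (\max_(b : (size s).-tuple bool | pbool (lin_indep (mask b s)))
      size (mask b s))%N.

Definition mfact (n : nat) (m : 'X_{1..n}) : nat := (\prod_(i < n) (m i)`!)%N.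

Definition smono (R : fieldType) (n : nat) (m : 'X_{1..n}) : {mpoly R[n]} :=
  ((mfact m)%:R)^-1 *: 'X_[m].

(* partial^{=k} f : the family of all partial_beta f with |beta| = k *)
Definition derivs_eq (R : fieldType) (n k : nat) (f : {mpoly R[n]})
  : seq {mpoly R[n]} :=
  map (fun b : 'X_{1..n < k.+1} => mderivm (val b) f)
      (filter (fun b : 'X_{1..n < k.+1} => mdeg (val b) == k)
              (enum (predT : pred (bmultinom n k.+1)))).

Definition msup (n : nat) (m : 'X_{1..n}) : nat := #|[set i : 'I_n | m i != 0%N]|.

(** Fix a maximal linearly independent subfamily B = (∂_β f)_β of ∂^{=k} f. For
    P ∈ M and a k-subset S of the support of P, the derivative ∂_{1_S} f has a
    nonzero coefficient at the monomial P - 1_S, hence so has some ∂_β f in B.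
    As no cancellation occurs in 0/1 polynomials, ∂_β f has a nonzero coefficient
    at Q exactly when β + Q ∈ M, so P' = β + (P - 1_S) lies in M. Thus
    S ↦ P - 1_S = P' - β injects the k-subsets of the support of P into the
    differences of a monomial of M and an index of B, so C(sup P, k) ≤ |M| |B|,
    and summing over P ∈ M gives the bound. *)

From HB Require Import structures.
From mathcomp Require Import all_boot all_order all_algebra.
From mathcomp Require Import mpoly.
From mathcomp Require Import reals.
From Stdlib Require Import Classical ClassicalDescription.
Set Implicit Arguments.
Unset Strict Implicit.
Import Order.TTheory GRing.Theory Num.Theory.
Local Open Scope ring_scope.

Section LinearSpan.
Variables (K : fieldType) (V : lmodType K).

Definition in_span (x : V) (t : seq V) : Prop :=
  exists c : nat -> K, x = \sum_(i < size t) c i *: t`_i.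

Lemma in_span_mem (x : V) (t : seq V) : x \in t -> in_span x t.
Proof.
move=> xt; have x_idx : (index x t < size t)%N by rewrite index_mem.
exists (fun j => (j == index x t)%:R).
rewrite (bigD1 (Ordinal x_idx)) //= eqxx scale1r.
rewrite nth_index // big1 ?addr0 // => i ix.
by rewrite -val_eqE /= in ix; rewrite (negbTE ix) scale0r.
Qed.

Lemma in_span_cons (x y : V) (t : seq V) : in_span x t -> in_span x (y :: t).
Proof.
move=> [c ->]; exists (fun j => if j is j'.+1 then c j' else 0).
by rewrite big_ord_recl /= scale0r add0r; apply: eq_bigr.
Qed.

Lemma lin_indep_cons (x : V) (t : seq V) :
  lin_indep t -> ~ in_span x t -> lin_indep (x :: t).
Proof.
move=> indep_t xNspan c; rewrite big_ord_recl /= => sum0.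
have c0 : c ord0 = 0.
  apply: contra_not_eq xNspan => c0_neq0.
  exists (fun j => - c (inord j.+1) / c ord0).
  apply: (scalerI c0_neq0); rewrite scaler_sumr.
  apply: (addrI (\sum_(i < size t) c (lift ord0 i) *: t`_i)).
  rewrite addrC sum0 -big_split /= big1 // => i _.
  rewrite scalerA mulrCA mulfV // mulr1 scaleNr.
  have -> : (inord i.+1 : 'I_(size t).+1) = lift ord0 i.
    by apply: val_inj; rewrite /= inordK // ltnS.
  by rewrite addrN.
move: sum0; rewrite c0 scale0r add0r => /indep_t ci0 i.
by case: (unliftP ord0 i) => [j ->|->].
Qed.

Lemma exists_spanning_indep_mask (s : seq V) :
  exists b : seq bool, [/\ size b = size s, lin_indep (mask b s) &
     forall x, x \in s -> in_span x (mask b s)].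
Proof.
elim: s => [|x s [b [size_b indep_b span_b]]].
  by exists [::]; split => // c _ [].
have [x_span | xNspan] := classic (in_span x (mask b s)).
  exists (false :: b); split => /=; first by rewrite size_b.
    exact: indep_b.
  by move=> y; rewrite inE => /predU1P [->|/span_b].
exists (true :: b); split => /=; first by rewrite size_b.
  exact: lin_indep_cons.
move=> y; rewrite inE => /predU1P [->|/span_b]; last exact: in_span_cons.
by apply: in_span_mem; rewrite mem_head.
Qed.

Lemma size_indep_mask_le_dim_spanf (s : seq V) (b : seq bool) :
  size b = size s -> lin_indep (mask b s) -> (size (mask b s) <= dim_spanf s)%N.
Proof.
move=> /eqP size_b indep_b.
pose bt : (size s).-tuple bool := Tuple size_b.
rewrite -[b]/(val bt).
apply: (@leq_bigmax_cond _ (fun b : (size s).-tuple bool => pbool (lin_indep (mask b s)))).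
by rewrite /pbool; case: excluded_middle_informative.
Qed.

End LinearSpan.

Lemma in_span_mcoeff_neq0 (R : fieldType) n (x : {mpoly R[n]}) t m :
  in_span x t -> x@_m != 0 -> exists2 i, (i < size t)%N & (t`_i)@_m != 0.
Proof.
move=> [c ->] sum_neq0; apply: NNPP => all0; move/eqP: sum_neq0; apply.
rewrite raddf_sum /= big1 // => i _; rewrite mcoeffZ.
have [-> | ti_neq0] := eqVneq (t`_i)@_m 0; first by rewrite mulr0.
by case: all0; exists i.
Qed.

Definition mindic n (S : {set 'I_n}) : 'X_{1..n} := [multinom ((i \in S) : nat) | i < n].

Lemma mdeg_mindic n (S : {set 'I_n}) : mdeg (mindic S) = #|S|.
Proof.
rewrite mdegE -sum1_card [RHS]big_mkcond /=.
by apply: eq_bigr => i _; rewrite mnmE; case: (i \in S).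
Qed.

Lemma mindic_inj n : injective (@mindic n).
Proof.
move=> S S' eqSS'; apply/setP => i.
by have := congr1 (fun m : 'X_{1..n} => m i) eqSS'; rewrite /= !mnmE; do 2!case: (_ \in _).
Qed.

Lemma mindic_le n (S : {set 'I_n}) (m : 'X_{1..n}) :
  S \subset [set i | m i != 0%N] -> (mindic S <= m)%MM.
Proof.
move=> /subsetP Ssupp; apply/mnm_lepP => i; rewrite mnmE.
by case: (boolP (i \in S)) => //= /Ssupp; rewrite inE lt0n.
Qed.

Section DerivativesOf01Polynomial.
Variables (R : numFieldType) (n : nat) (M : seq 'X_{1..n}) (f : {mpoly R[n]}).
Hypotheses (uniq_M : uniq M) (f_def : f = \sum_(m <- M) smono R m).

Lemma mfact_neq0 (P : 'X_{1..n}) : ((mfact P)%:R : R) != 0.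
Proof. by rewrite pnatr_eq0 -lt0n; apply: prodn_gt0 => i; apply: fact_gt0. Qed.

Lemma mcoeff_sum_smono P : f@_P = if P \in M then ((mfact P)%:R)^-1 else 0.
Proof.
have mcoeff_smono m : (smono R m)@_P = if m == P then ((mfact P)%:R)^-1 else 0.
  by rewrite mcoeffZ mcoeffX; case: eqP => [->|_]; rewrite ?mulr1 ?mulr0.
rewrite f_def raddf_sum /=; case: ifP => PM.
  rewrite (bigD1_seq P) //= mcoeff_smono eqxx big1 ?addr0 // => m /negbTE mP.
  by rewrite mcoeff_smono mP.
rewrite big1_seq // => m /andP [_ mM]; rewrite mcoeff_smono.
by case: eqP => // mP; rewrite -mP mM in PM.
Qed.

Lemma mcoeff_mderivm_neq0 b Q : ((mderivm b f)@_Q != 0) = ((b + Q)%MM \in M).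
Proof.
have ffact_neq0 : (\prod_(i < n) ((b + Q)%MM i) ^_ (b i) != 0)%N.
  by rewrite -lt0n; apply: prodn_gt0 => i; rewrite ffact_gt0 mnmDE leq_addr.
rewrite mcoeff_mderivm mulrn_eq0 negb_or ffact_neq0 mcoeff_sum_smono.
by case: ifP; rewrite ?eqxx // invr_eq0 mfact_neq0.
Qed.

Variables (k : nat) (B : seq 'X_{1..n}).
Hypothesis B_span :
  forall b, mdeg b = k -> in_span (mderivm b f) (map (fun b => mderivm b f) B).

Lemma exists_mderivm_basis_mem b Q :
  mdeg b = k -> (b + Q)%MM \in M -> exists2 b', b' \in B & (b' + Q)%MM \in M.
Proof.
move=> deg_b bQM.
have [i i_lt] := in_span_mcoeff_neq0 (B_span deg_b) (etrans (mcoeff_mderivm_neq0 b Q) bQM).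
rewrite size_map in i_lt; rewrite (nth_map 0%MM) // mcoeff_mderivm_neq0 => b'QM.
by exists (nth 0%MM B i) => //; apply: mem_nth.
Qed.

Lemma binomial_msup_le P : P \in M -> ('C(msup P, k) <= size M * size B)%N.
Proof.
move=> PM; rewrite /msup -cards_draws.
set T := [set S | _ & _].
pose Q (S : {set 'I_n}) := (P - mindic S)%MM.
have Q_inj : {in enum T &, injective Q}.
  move=> S S'; rewrite !mem_enum !inE => /andP [/mindic_le leS _] /andP [/mindic_le leS' _].
  move=> /(congr1 (fun m => P - m)%MM); rewrite !submBA // !(addmC P) !addmK.
  exact: mindic_inj.
rewrite cardE -(size_map Q) -(size_allpairs (fun P' b => (P' - b)%MM) M B).
apply: uniq_leq_size; first by rewrite map_inj_in_uniq // enum_uniq.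
move=> _ /mapP [S + ->]; rewrite mem_enum inE => /andP [/mindic_le leS /eqP card_S].
have deg_S : mdeg (mindic S) = k by rewrite mdeg_mindic.
have SQM : (mindic S + Q S)%MM \in M by rewrite addmC submK.
have [b' b'B b'QM] := exists_mderivm_basis_mem deg_S SQM.
apply/allpairsP; exists ((b' + Q S)%MM, b'); split => //=.
by rewrite addmC addmK.
Qed.

Lemma sum_binomial_msup_le :
  (\sum_(P <- M) 'C(msup P, k) <= size M ^ 2 * size B)%N.
Proof.
rewrite expnS -mulnA -[X in (X * _)%N]count_predT -sum1_count big_distrl /=.
by rewrite big_seq_cond [X in (_ <= X)%N]big_seq_cond; apply: leq_sum => P /andP [PM _];
  rewrite mul1n binomial_msup_le.
Qed.

End DerivativesOf01Polynomial.

Lemma mderivm_mem_derivs_eq (R : fieldType) n k (f : {mpoly R[n]}) b :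
  mdeg b = k -> mderivm b f \in derivs_eq k f.
Proof.
move=> deg_b; have deg_lt : (mdeg b < k.+1)%N by rewrite deg_b.
apply/mapP; exists (BMultinom deg_lt) => //.
by rewrite mem_filter /= deg_b eqxx mem_enum.
Qed.

Theorem theorem2 (R : realType) (n : nat) (M : seq 'X_{1..n}) (f : {mpoly R[n]})
  (k : nat) :
  uniq M -> M != [::] ->
  f = \sum_(m <- M) smono R m ->
  ((\sum_(m <- M) 'C(msup m, k))%:R / ((size M) ^ 2)%:R : R)
    <= (dim_spanf (derivs_eq k f))%:R.
Proof.
move=> uniq_M M_neq0 f_def.
have [bs [size_bs indep_bs span_bs]] := exists_spanning_indep_mask (derivs_eq k f).
set D := derivs_eq k f in size_bs indep_bs span_bs.
pose B := map val (mask bs (filter (fun b : 'X_{1..n < k.+1} => mdeg (val b) == k)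
                                   (enum (predT : pred (bmultinom n k.+1))))).
have D_basis : mask bs D = map (fun b => mderivm b f) B by rewrite -map_comp map_mask.
have B_span b : mdeg b = k -> in_span (mderivm b f) (map (fun b => mderivm b f) B).
  by move=> /(mderivm_mem_derivs_eq f) /span_bs; rewrite D_basis.
have dim_ge : (size B <= dim_spanf D)%N.
  by have := size_indep_mask_le_dim_spanf size_bs indep_bs; rewrite D_basis size_map.
have size_M_gt0 : (0 < size M ^ 2)%N by rewrite expn_gt0 lt0n size_eq0 M_neq0.
rewrite ler_pdivrMr ?ltr0n // -natrM ler_nat.
apply: leq_trans (sum_binomial_msup_le uniq_M f_def B_span) _.
by rewrite mulnC leq_mul2r dim_ge orbT.
Qed.
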